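(* Let $\Gamma$ be a simplicial complex whose $1$-skeleton (graph) contains, as an induced subgraph, one of the following graphs on four vertices: the disjoint union of two edges $2K_2$, the path $P_4$ with three edges, or the $4$-cycle $C_4$. Then for every simplicial complex $\Delta$ (on a vertex set disjoint from that of $\Gamma$), \[ \mathrm{ctd}(\Delta*\Gamma)\;\ge\;\mathrm{ctd}(\Delta)+1. \]
   Context: Simplicial complexes contain the empty face. Given convex polytopes $P_1,\dots,P_n\subset\mathbb{R}^d$ each containing the origin and a point $\mu\in\mathbb{R}^d$, write $P_\sigma=\sum_{i\in\sigma}P_i$ (Minkowski sum) for $\sigma\subseteq[n]$, with $P_\emptyset=\{0\}$; the Minkowski complex $\Delta(\mathcal{P};\mu)$ is the simplicial complex on vertex set $[n]$ whose faces are the $\sigma\subseteq[n]$ with $\mu\notin P_\sigma$. The convex threshold dimension $\mathrm{ctd}(\Delta)$ of a simplicial complex $\Delta$ on vertex set $[n]$ is the smallest $d$ such that $\Delta=\Delta(\mathcal{P};\mu)$ for some family $\mathcal{P}=(P_1,\dots,P_n)$ of convex bodies (equivalently, convex polytopes) in $\mathbb{R}^d$ containing the origin and some $\mu\in\mathbb{R}^d$; this is finite for every simplicial complex. The join of complexes $\Delta$ and $\Gamma$ on disjoint vertex sets is $\Delta*\Gamma=\{\sigma\uplus\tau:\sigma\in\Delta,\tau\in\Gamma\}$. *)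

From mathcomp Require Import all_boot all_order all_algebra.
From mathcomp Require Import boolp reals.
Set Implicit Arguments. Unset Strict Implicit. Unset Printing Implicit Defensive.
Import Order.TTheory GRing.Theory Num.Theory.
Local Open Scope ring_scope.

(* A simplicial complex on the (finite) vertex set V: a family of subsets of V
   containing the empty face and closed under taking subsets.
   (Vertices of V need not be faces: "ghost vertices" are allowed, as for
   Minkowski complexes on vertex set [n].) *)
Definition is_complex (V : finType) (D : {set {set V}}) : Prop :=
  set0 \in D /\ forall s t : {set V}, s \in D -> t \subset s -> t \in D.

Definition in_conv (R : realType) (d : nat) (S : seq 'rV[R]_d) (x : 'rV[R]_d) : Prop :=
  exists w : 'I_(size S) -> R,
    (forall i, 0 <= w i) /\ \sum_i w i = 1 /\ x = \sum_i w i *: S`_(nat_of_ord i).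

Definition in_mink (R : realType) (d : nat) (V : finType) (P : V -> seq 'rV[R]_d)
  (s : {set V}) (mu : 'rV[R]_d) : Prop :=
  exists x : V -> 'rV[R]_d,
    (forall i, i \in s -> in_conv (P i) (x i)) /\ mu = \sum_(i in s) x i.

Definition ctd_realizable (R : realType) (V : finType) (D : {set {set V}}) (d : nat) : Prop :=
  exists (P : V -> seq 'rV[R]_d) (mu : 'rV[R]_d),
    (forall i, in_conv (P i) 0) /\
    (forall s : {set V}, s \in D <-> ~ in_mink P s mu).

Lemma ctd_ex_asbool (R : realType) (V : finType) (D : {set {set V}}) :
  (exists d, ctd_realizable R D d) -> exists d, `[< ctd_realizable R D d >].
Proof. by case=> d H; exists d; apply/asboolP. Qed.

(* Convex threshold dimension: least d such that D is realizable in R^d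
   (the paper shows such d always exists; the fallback value 0 is never used
   for simplicial complexes). *)
Definition ctd (R : realType) (V : finType) (D : {set {set V}}) : nat :=
  match pselect (exists d, ctd_realizable R D d) with
  | left h => ex_minn (ctd_ex_asbool h)
  | right _ => 0%N
  end.

Definition cjoin (V1 V2 : finType) (D : {set {set V1}}) (G : {set {set V2}})
  : {set {set (V1 + V2)%type}} :=
  [set s : {set (V1 + V2)%type} | (inl @^-1: s \in D) && (inr @^-1: s \in G)].

Definition skel_adj (V : finType) (G : {set {set V}}) (u v : V) : bool :=
  (u != v) && ([set u; v] \in G).

Definition edge_2K2 (i j : 'I_4) : bool :=
  let a := minn i j in let b := maxn i j in
  ((a == 0) && (b == 1)) || ((a == 2) && (b == 3)).
Definition edge_P4 (i j : 'I_4) : bool :=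
  let a := minn i j in let b := maxn i j in
  ((a == 0) && (b == 1)) || ((a == 1) && (b == 2)) || ((a == 2) && (b == 3)).
Definition edge_C4 (i j : 'I_4) : bool :=
  let a := minn i j in let b := maxn i j in
  ((a == 0) && (b == 1)) || ((a == 1) && (b == 2)) || ((a == 2) && (b == 3))
  || ((a == 0) && (b == 3)).

Definition induced_in_skel (V : finType) (G : {set {set V}}) (H : 'I_4 -> 'I_4 -> bool)
  : Prop :=
  exists f : 'I_4 -> V, injective f /\
    forall i j : 'I_4, i != j -> (skel_adj G (f i) (f j) = H i j).

(* If the 1-skeleton of G contains an induced 2K2, P4 or C4, it has edges ab and
   ce whose "diagonals" ac and be are non-edges.  In a realization (P, mu) of the
   join, the non-edges give mu = alpha + gamma = beta + delta with alpha, beta,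
   gamma, delta in P_a, P_b, P_c, P_e.  Put w = gamma + delta - mu =
   mu - alpha - beta.  If mu + r w lay in P_s for a face s of D, rescaling by
   1/(1 + |r|) (all polytopes contain 0) would put mu in P_s + P_a + P_b (r >= 0)
   or in P_s + P_c + P_e (r <= 0), although both are faces of the join.  So the
   line mu + Rw misses every P_s with s in D, while it meets P_s for every
   non-face s; projecting along w then realizes D in one dimension less. *)

From HB Require Import structures.
From mathcomp Require Import all_boot all_order all_algebra.
From mathcomp Require Import boolp reals.
From mathcomp Require Import ring.
Set Implicit Arguments. Unset Strict Implicit. Unset Printing Implicit Defensive.
Import Order.TTheory GRing.Theory Num.Theory.
Local Open Scope ring_scope.

Section ConvexHull.
Variables (R : realType) (n : nat).
Implicit Types (S : seq 'rV[R]_n) (x : 'rV[R]_n).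

Lemma mem_in_conv S x : x \in S -> in_conv S x.
Proof.
move=> xS; have xi : (index x S < size S)%N by rewrite index_mem.
exists (fun i => (i == Ordinal xi)%:R); split; first by move=> i; rewrite ler0n.
split; rewrite (bigD1 (Ordinal xi)) //= eqxx ?scale1r ?nth_index //.
  by rewrite big1 ?addr0 // => i /negbTE ->.
by rewrite big1 ?addr0 // => i /negbTE ->; rewrite scale0r.
Qed.

Lemma in_conv_scale S x l :
  in_conv S 0 -> in_conv S x -> 0 <= l <= 1 -> in_conv S (l *: x).
Proof.
move=> [v [v0 [v1 S0]]] [w [w0 [w1 ->]]] /andP [l0 l1].
exists (fun i => l * w i + (1 - l) * v i); split.
  by move=> i; rewrite addr_ge0 // mulr_ge0 ?subr_ge0.
split; first by rewrite big_split /= -!mulr_sumr w1 v1 !mulr1 addrC subrK.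
rewrite [RHS](eq_bigr (fun i => l *: (w i *: S`_i) + (1 - l) *: (v i *: S`_i))).
  by rewrite big_split /= -!scaler_sumr -S0 scaler0 addr0.
by move=> i _; rewrite !scalerA -scalerDl.
Qed.

Lemma in_conv_coord_eq0 S x k :
  (forall y, y \in S -> y 0 k = 0) -> in_conv S x -> x 0 k = 0.
Proof.
move=> S0 [w [_ [_ ->]]]; rewrite summxE big1 // => i _.
by rewrite mxE S0 ?mulr0 // mem_nth.
Qed.

Lemma in_conv_nat S x :
  in_conv S x <-> exists w : nat -> R, (forall i, 0 <= w i) /\
    \sum_(i < size S) w i = 1 /\ x = \sum_(i < size S) w i *: S`_i.
Proof.
split=> [[w [w0 [w1 ->]]] | [w [w0 [w1 ->]]]]; last first.
  by exists (fun i : 'I_(size S) => w i).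
exists (fun i => oapp w 0 (insub i)); split.
  by move=> i; case: insub => //= ?; apply: w0.
by split; [rewrite -w1|]; apply: eq_bigr => i _; rewrite valK.
Qed.

End ConvexHull.

Lemma in_conv_map (R : realType) n m (f : {linear 'rV[R]_n -> 'rV[R]_m})
    (S : seq 'rV[R]_n) y :
  in_conv (map f S) y <-> exists2 x, in_conv S x & f x = y.
Proof.
have fE (w : nat -> R) : f (\sum_(i < size S) w i *: S`_i) =
    \sum_(i < size (map f S)) w i *: (map f S)`_i.
  rewrite linear_sum size_map; apply: eq_bigr => i _.
  by rewrite linearZ (set_nth_default (f 0)) ?size_map // (nth_map 0).
split=> [/in_conv_nat [w [w0 [w1 ->]]] | [x /in_conv_nat [w [w0 [w1 ->]]] <-]].
  exists (\sum_(i < size S) w i *: S`_i); last by rewrite fE.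
  by apply/in_conv_nat; exists w; rewrite -(size_map f).
by apply/in_conv_nat; exists w; rewrite fE size_map.
Qed.

Section MinkowskiSum.
Variables (R : realType) (n : nat) (V : finType) (P : V -> seq 'rV[R]_n).
Implicit Types (A B s : {set V}) (p q y : 'rV[R]_n).

Lemma in_mink_set1 i p : in_conv (P i) p -> in_mink P [set i] p.
Proof.
by move=> Pp; exists (fun=> p); split; [move=> j /set1P -> | rewrite big_set1].
Qed.

Lemma in_mink_setU A B p q : [disjoint A & B] ->
  in_mink P A p -> in_mink P B q -> in_mink P (A :|: B) (p + q).
Proof.
move=> AB [x [xA ->]] [y [yB ->]].
exists (fun i => if i \in A then x i else y i); split.
  by move=> i; rewrite inE; case: ifP => [iA _ | _ /= iB]; [apply: xA | apply: yB].
rewrite [RHS](eq_bigl [predU A & B]) => [|i]; last by rewrite !inE.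
rewrite bigU //; congr (_ + _); apply: eq_bigr => i; first by move->.
by move=> /(disjointFl AB) ->.
Qed.

Lemma in_mink_set2 u v y : u != v ->
  in_mink P [set u; v] y <->
  exists p q, [/\ in_conv (P u) p, in_conv (P v) q & y = p + q].
Proof.
move=> uv; split=> [[x [xP ->]] | [p [q [Pp Pq ->]]]].
  exists (x u), (x v); split; try by apply: xP; rewrite !inE eqxx ?orbT.
  by rewrite big_setU1 ?big_set1 // inE.
by apply: in_mink_setU; rewrite ?disjoints1 ?inE //; apply: in_mink_set1.
Qed.

Lemma in_mink_scale A p l : (forall i, in_conv (P i) 0) ->
  in_mink P A p -> 0 <= l <= 1 -> in_mink P A (l *: p).
Proof.
move=> P0 [x [xP ->]] l01; exists (fun i => l *: x i); split.
  by move=> i /xP xi; apply: in_conv_scale.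
by rewrite scaler_sumr.
Qed.

Lemma in_mink_map m (f : {linear 'rV[R]_n -> 'rV[R]_m}) s (y : 'rV[R]_m) :
  in_mink (fun i => map f (P i)) s y <-> exists2 x, in_mink P s x & f x = y.
Proof.
split=> [[y' [y'P ->]] | [_ [z [zP ->]] <-]]; last first.
  exists (fun i => f (z i)); split; last by rewrite linear_sum.
  by move=> i /zP zi; apply/in_conv_map; exists (z i).
have /choice [x xP] : forall i, exists x, i \in s -> in_conv (P i) x /\ f x = y' i.
  move=> i; case/boolP: (i \in s) => [/y'P/in_conv_map [x] | _]; last by exists 0.
  by exists x.
exists (\sum_(i in s) x i); first by exists x; split=> // i /xP [].
by rewrite linear_sum; apply: eq_bigr => i /xP [].
Qed.

Lemma in_mink_imset (W : finType) (h : W -> V) (s : {set W}) p : injective h ->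
  in_mink P (h @: s) p <-> in_mink (P \o h) s p.
Proof.
move=> h_inj; split=> [[x [xP ->]] | [x [xP ->]]].
  exists (x \o h); split; first by move=> i si; apply: xP; rewrite imset_f.
  by rewrite big_imset // => ? ? _ _ /h_inj.
have pickK i : [pick j | h j == h i] = Some i.
  by case: pickP => [j /eqP/h_inj -> // | /(_ i)]; rewrite eqxx.
exists (fun j => oapp x 0 [pick i | h i == j]); split.
  by move=> _ /imsetP [i si ->]; rewrite pickK; apply: xP.
rewrite big_imset => [|? ? _ _ /h_inj] //.
by apply: eq_bigr => i _; rewrite pickK.
Qed.

Lemma in_mink_ray A u v p q mu t : (forall i, in_conv (P i) 0) ->
  [disjoint A & [set u; v]] -> u != v -> in_conv (P u) p -> in_conv (P v) q ->
  0 <= t -> in_mink P A (mu + t *: (mu - p - q)) -> in_mink P (A :|: [set u; v]) mu.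
Proof.
move=> P0 Auv uv Pp Pq t0 Az.
have t1 : 0 < 1 + t by rewrite ltr_wpDr.
have -> : mu = (1 + t)^-1 *: (mu + t *: (mu - p - q)) +
               ((t / (1 + t)) *: p + (t / (1 + t)) *: q).
  by apply/rowP => j; rewrite !mxE; field; rewrite gt_eqF.
have t01 : 0 <= t / (1 + t) <= 1.
  by rewrite divr_ge0 ?(ltW t1) //= ler_pdivrMr // mul1r lerDr.
apply: in_mink_setU => //.
  by apply: in_mink_scale; rewrite // invr_ge0 ltW //= invf_le1 // lerDl.
by apply/in_mink_set2 => //; exists (t / (1 + t) *: p), (t / (1 + t) *: q);
  split=> //; apply: in_conv_scale.
Qed.

End MinkowskiSum.

Definition realizes (R : realType) n (V : finType) (P : V -> seq 'rV[R]_n)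
    (mu : 'rV[R]_n) (D : {set {set V}}) : Prop :=
  (forall i, in_conv (P i) 0) /\ (forall s, s \in D <-> ~ in_mink P s mu).

Section CtdMin.
Variables (R : realType) (V : finType) (D : {set {set V}}).

Lemma ctd_min d : ctd_realizable R D d -> (ctd R D <= d)%N.
Proof.
move=> Dd; rewrite /ctd; case: pselect => [h | []]; last by exists d.
by case: ex_minnP => k _; apply; apply/asboolP.
Qed.

Lemma ctd_realizable_ctd :
  (exists d, ctd_realizable R D d) -> ctd_realizable R D (ctd R D).
Proof.
by move=> Dd; rewrite /ctd; case: pselect => [h | //]; case: ex_minnP => k /asboolP.
Qed.

End CtdMin.

Section CubeRealization.
Variables (R : realType) (V : finType) (D : {set {set V}}).
Hypothesis D_complex : is_complex D.

(* Coordinates are indexed by the subsets of V.  The coordinate of a face s of D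
   separates mu from P_s, while for a non-face s every face of D misses some
   vertex of s, which can supply that coordinate of mu. *)
Local Notation n := #|{set V}|.
Implicit Types (B : {set 'I_n}) (s : {set V}).
Let face (k : 'I_n) : {set V} := enum_val k.
Let ind (B : {set 'I_n}) : 'rV[R]_n := \row_k (k \in B)%:R.
Let avoiding (i : V) := [set k | (face k \in D) && (i \notin face k)].
Let cube (i : V) := [seq ind (B :&: avoiding i) | B <- enum {set 'I_n}].
Let faces_ind := ind [set k | face k \in D].

Lemma in_conv_cube i B : B \subset avoiding i -> in_conv (cube i) (ind B).
Proof.
move=> /setIidPl BA; apply: mem_in_conv; rewrite -BA.
by apply: map_f; rewrite mem_enum.
Qed.

Lemma not_in_mink_cube_face s : s \in D -> ~ in_mink cube s faces_ind.
Proof.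
move=> sD [x [xP /rowP /(_ (enum_rank s))]].
rewrite summxE big1 => [|i si].
  by rewrite !mxE inE /face enum_rankK sD => /eqP; rewrite oner_eq0.
apply: in_conv_coord_eq0 (xP i si) => _ /mapP [B _ ->].
by rewrite mxE !inE /face enum_rankK si !andbF.
Qed.

Lemma in_mink_cube_nonface s : s \notin D -> in_mink cube s faces_ind.
Proof.
move=> sD; pose owner (k : 'I_n) := [pick i in s :\: face k].
have ownerE k : face k \in D -> exists2 i, i \in s & owner k = Some i.
  rewrite /owner; case: pickP => [i | none kD].
    by rewrite !inE => /andP [_ si]; exists i.
  case/negP: sD; apply: D_complex.2 kD _; apply/subsetP => y ys.
  by apply/negPn/negP => yk; move: (none y); rewrite !inE yk ys.
exists (fun i => ind [set k | (face k \in D) && (owner k == Some i)]); split.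
  move=> i si; apply: in_conv_cube; apply/subsetP => k; rewrite !inE.
  case/andP => -> /eqP; rewrite /owner; case: pickP => // j.
  by rewrite !inE => /andP [jk _] [<-].
apply/rowP => k; rewrite summxE !mxE inE.
case kD: (face k \in D); last by rewrite big1 // => i _; rewrite mxE inE kD.
have [i si ki] := ownerE k kD.
rewrite (bigD1 i) //= mxE inE kD ki eqxx big1 ?addr0 // => j /andP [_ ji].
by rewrite mxE inE kD ki /=; case: eqP => // -[ij]; rewrite ij eqxx in ji.
Qed.

Lemma complex_realizable : ctd_realizable R D n.
Proof.
exists cube, faces_ind; split.
  move=> i; have -> : 0 = ind set0 by apply/rowP => k; rewrite !mxE inE.
  exact/in_conv_cube/sub0set.
move=> s; split; first exact: not_in_mink_cube_face.
by move=> nP; apply/negPn/negP => /in_mink_cube_nonface.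
Qed.

End CubeRealization.

Section ProjectionAlong.
Variables (R : realType) (n : nat) (w : 'rV[R]_n.+1) (k : 'I_n.+1).

Definition proj_along (x : 'rV[R]_n.+1) : 'rV[R]_n :=
  col' k (x - (x 0 k / w 0 k) *: w).

Fact proj_along_is_linear : linear proj_along.
Proof. by move=> c x y; apply/rowP => j; rewrite !mxE; ring. Qed.

HB.instance Definition _ := GRing.isLinear.Build R 'rV[R]_n.+1 'rV[R]_n _
  proj_along proj_along_is_linear.

Lemma proj_along_eq0 x : w 0 k != 0 -> proj_along x = 0 -> x = (x 0 k / w 0 k) *: w.
Proof.
move=> wk /rowP x0; apply/rowP => j; rewrite mxE.
case: (unliftP k j) => [j'|] ->; last by rewrite -mulrA mulVf ?mulr1.
by move: (x0 j'); rewrite !mxE => /eqP; rewrite subr_eq0 => /eqP.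
Qed.

End ProjectionAlong.

Lemma realizable_proj_line (R : realType) n (V : finType) (D : {set {set V}})
    (Q : V -> seq 'rV[R]_n.+1) mu w :
  w != 0 -> (forall i, in_conv (Q i) 0) ->
  (forall s, s \notin D -> in_mink Q s mu) ->
  (forall s r, s \in D -> ~ in_mink Q s (mu + r *: w)) ->
  ctd_realizable R D n.
Proof.
move=> w0 Q0 Q_nonface Q_face.
have [k wk] : exists k, w 0 k != 0.
  apply/existsP; apply: contraNT w0 => /existsPn w0.
  by apply/eqP/rowP => j; rewrite mxE; apply/eqP/negPn/w0.
pose pi := proj_along w k.
exists (fun i => map pi (Q i)), (pi mu); split.
  by move=> i; rewrite -(linear0 pi); apply/in_conv_map; exists 0.
move=> s; split=> [sD /in_mink_map [x Qx] | nQ].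
  move/eqP; rewrite -subr_eq0 -linearB /= => /eqP /(proj_along_eq0 wk) xmu.
  by apply: (Q_face s ((x - mu) 0 k / w 0 k) sD); rewrite -xmu addrC subrK.
apply/negPn/negP => /Q_nonface Qmu; apply: nQ.
by apply/in_mink_map; exists mu.
Qed.

Section Join.
Variables (V1 V2 : finType) (D : {set {set V1}}) (G : {set {set V2}}).

Lemma cjoin_complex : is_complex D -> is_complex G -> is_complex (cjoin D G).
Proof.
move=> [D0 Dc] [G0 Gc]; split; first by rewrite inE !preimset0 D0 G0.
move=> s t; rewrite !inE => /andP [sD sG] ts.
by rewrite (Dc _ _ sD) ?(Gc _ _ sG) ?preimsetS.
Qed.

Lemma mem_cjoin (s : {set V1}) (t : {set V2}) :
  (inl @: s :|: inr @: t \in cjoin D G) = (s \in D) && (t \in G).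
Proof.
have inl_inr x : (@inl V1 V2 x \in inr @: t) = false by apply/imsetP => -[].
have inr_inl y : (@inr V1 V2 y \in inl @: s) = false by apply/imsetP => -[].
have inlK : inl @^-1: (inl @: s :|: inr @: t) = s.
  by apply/setP => x; rewrite !inE inl_inr mem_imset ?orbF // => ? ? [].
have inrK : inr @^-1: (inl @: s :|: inr @: t) = t.
  by apply/setP => y; rewrite !inE inr_inl mem_imset // => ? ? [].
by rewrite inE inlK inrK.
Qed.

End Join.

Lemma cjoin_avoiding_line (R : realType) n (V1 V2 : finType) (D : {set {set V1}})
    (G : {set {set V2}}) (P : V1 + V2 -> seq 'rV[R]_n) mu (a b c e : V2) :
  set0 \in D -> realizes P mu (cjoin D G) ->
  skel_adj G a b -> skel_adj G c e ->
  ~~ skel_adj G a c -> a != c -> ~~ skel_adj G b e -> b != e ->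
  exists2 w, w != 0 & forall s r, s \in D -> ~ in_mink P (inl @: s) (mu + r *: w).
Proof.
move=> D0 [P0 PD] /andP [ab abG] /andP [ce ceG] ac_nadj ac be_nadj be.
have inr_set2 u v : inr @: [set u; v] = [set inr u; inr v] :> {set V1 + V2}.
  by rewrite imsetU1 imset_set1.
have inr_neq u v : u != v -> (inr u != inr v :> V1 + V2) by rewrite (inj_eq inr_inj).
have disj (s : {set V1}) u v : [disjoint inl @: s & [set inr u; inr v] :> {set V1 + V2}].
  by rewrite disjoint_subset; apply/subsetP => _ /imsetP [x _ ->]; rewrite !inE.
have edge_face s u v : s \in D -> [set u; v] \in G ->
    ~ in_mink P (inl @: s :|: [set inr u; inr v]) mu.
  by move=> sD uvG; apply/PD; rewrite -inr_set2 mem_cjoin sD.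
have nonedge_sum u v : ~~ skel_adj G u v -> u != v ->
    exists p q, [/\ in_conv (P (inr u)) p, in_conv (P (inr v)) q & mu = p + q].
  move=> uv_nadj uv; apply/in_mink_set2; first exact: inr_neq.
  apply: contrapT => /PD; rewrite -inr_set2 -[inr @: _]set0U -(imset0 inl).
  by rewrite mem_cjoin D0 /= => uvG; rewrite /skel_adj uv uvG in uv_nadj.
have [al [ga [Pal Pga mu_ac]]] := nonedge_sum a c ac_nadj ac.
have [be' [de [Pbe Pde mu_be]]] := nonedge_sum b e be_nadj be.
have w_ab : ga + de - mu = mu - al - be'.
  have -> : al = mu - ga by rewrite mu_ac addrK.
  have -> : be' = mu - de by rewrite mu_be addrK.
  by apply/rowP => j; rewrite !mxE; ring.
exists (ga + de - mu).
  apply/eqP => w0; apply: (edge_face set0 a b D0 abG).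
  rewrite imset0 set0U; apply/in_mink_set2; first exact: inr_neq.
  by exists al, be'; split=> //; apply/eqP; rewrite -subr_eq0 opprD addrA -w_ab w0.
move=> s r sD z_in; have [r0 | r_neg] := lerP 0 r.
  apply: (edge_face s a b sD abG).
  by apply: (in_mink_ray P0 (disj _ _ _) (inr_neq _ _ ab) Pal Pbe r0); rewrite -w_ab.
apply: (edge_face s c e sD ceG).
apply: (in_mink_ray P0 (disj _ _ _) (inr_neq _ _ ce) Pga Pde (t := - r)).
  by rewrite oppr_ge0 ltW.
suff -> : - r *: (mu - ga - de) = r *: (ga + de - mu) by [].
by apply/rowP => j; rewrite !mxE; ring.
Qed.

Lemma realizable_cjoin_pred (R : realType) (V1 V2 : finType) (D : {set {set V1}})
    (G : {set {set V2}}) (a b c e : V2) m :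
  set0 \in D -> skel_adj G a b -> skel_adj G c e ->
  ~~ skel_adj G a c -> a != c -> ~~ skel_adj G b e -> b != e ->
  ctd_realizable R (cjoin D G) m -> (0 < m)%N /\ ctd_realizable R D m.-1.
Proof.
move=> D0 ab ce ac_nadj ac be_nadj be [P [mu PD]].
have [w w0 w_avoid] := cjoin_avoiding_line D0 PD ab ce ac_nadj ac be_nadj be.
case: m P mu PD w w0 w_avoid => [|m] P mu [P0 PD] w w0 w_avoid.
  by rewrite (thinmx0 w) eqxx in w0.
split=> //; apply: (realizable_proj_line (Q := P \o inl) w0) => [i | s sD | s r sD].
- exact: P0.
- apply/(in_mink_imset _ _ _ inl_inj); apply: contrapT => /PD.
  by rewrite -[inl @: s]setU0 -(imset0 inr) mem_cjoin (negbTE sD).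
- by move/(in_mink_imset _ _ _ inl_inj); apply: w_avoid.
Qed.

Lemma ctd_cjoin_ge (R : realType) (V1 V2 : finType) (D : {set {set V1}})
    (G : {set {set V2}}) (a b c e : V2) :
  is_complex D -> is_complex G -> skel_adj G a b -> skel_adj G c e ->
  ~~ skel_adj G a c -> a != c -> ~~ skel_adj G b e -> b != e ->
  (ctd R D + 1 <= ctd R (cjoin D G))%N.
Proof.
move=> Dc Gc ab ce ac_nadj ac be_nadj be.
have join_real := complex_realizable R (cjoin_complex Dc Gc).
have [ctd_gt0 D_real] := realizable_cjoin_pred Dc.1 ab ce ac_nadj ac be_nadj be
  (ctd_realizable_ctd (ex_intro _ _ join_real)).
by rewrite addn1 -(prednK ctd_gt0) ltnS ctd_min.
Qed.

Theorem theorem3 (R : realType) (V1 V2 : finType)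
  (D : {set {set V1}}) (G : {set {set V2}}) :
  is_complex D -> is_complex G ->
  (induced_in_skel G edge_2K2 \/ induced_in_skel G edge_P4 \/ induced_in_skel G edge_C4) ->
  (ctd R D + 1 <= ctd R (cjoin D G))%N.
Proof.
move=> Dc Gc; case=> [|[|]] [f [f_inj f_adj]];
  apply: (@ctd_cjoin_ge R V1 V2 D G (f 0) (f 1) (f 2) (f 3)) => //;
  by rewrite ?f_adj ?(inj_eq f_inj).
Qed.
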